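(* Let $c_0=7/(2\sqrt3)$ and $c_1=2\sqrt2$, and let $\alpha(c)$ be the linear function of $c$ with $\alpha(c_0)=\sqrt3/4$ and $\alpha(c_1)=1/\sqrt2$. Then, for $c>0$, $$ s(c)\ge\begin{cases}\frac{9c^2}{28}, & c\le c_0,\\[2pt] -c^2+7\alpha c+\frac{c}{\alpha}-11\alpha^2-2-\frac{1}{4\alpha^2}, & c_0\le c\le c_1,\end{cases}$$ where $\alpha=\alpha(c)$.
   Context: $[n]=\{1,\dots,n\}$; for $A\subset\mathbb Z$, $A+A=\{a+b:a,b\in A\}$. Let $s(k,n)=\max\{|A+A|: A\subseteq[n],\ |A|=k\}$ and, for real $c>0$, $s(c)=\liminf_{n\to\infty} s(\lfloor cn^{1/2}\rfloor,n)/n$. *)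

From Stdlib Require Import Reals ZArith.
From Coquelicot Require Import Coquelicot.
From mathcomp Require Import all_boot.

Set Implicit Arguments.
Unset Strict Implicit.
Unset Printing Implicit Defensive.

(* A subset of [n] = {1..n} is represented as A : {set 'I_n.+1} with 0 \notin A. *)
Definition sumset_card (n : nat) (A : {set 'I_n.+1}) : nat :=
  #|[set m : 'I_(2 * n).+1 |
      [exists a in A, exists b in A, (nat_of_ord m == nat_of_ord a + nat_of_ord b)%N]]|.

(* s(k,n) = max { |A+A| : A ⊆ [n], |A| = k }  (0 if no such A, i.e. k > n) *)
Definition s_kn (k n : nat) : nat :=
  (\max_(A : {set 'I_n.+1} | (ord0 \notin A) && (#|A| == k)) sumset_card A)%N.

Open Scope R_scope.

Definition s_c (c : R) : Rbar :=
  LimInf_seq (fun n : nat =>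
    INR (s_kn (Z.to_nat (Int_part (c * sqrt (INR n)))) n) / INR n).

Definition c_0 : R := 7 / (2 * sqrt 3).
Definition c_1 : R := 2 * sqrt 2.

Definition alpha (c : R) : R :=
  sqrt 3 / 4 + (c - c_0) * (1 / sqrt 2 - sqrt 3 / 4) / (c_1 - c_0).

Definition bound_mid (c : R) : R :=
  let a := alpha c in
  - c ^ 2 + 7 * a * c + c / a - 11 * a ^ 2 - 2 - 1 / (4 * a ^ 2).

(* For m ~ a sqrt n, o ~ w n and b ~ min(c - 3a, (1 - w - a^2)/a) sqrt n, the set
     A = [1, m+1] U {o + (m+1) i : i < m} U {o + m(m+1) + m j : j < b} U [n-m, n]
   has at most 3m + 2 + b <= k elements.  Adding the two end intervals to the two
   progressions fills the interval (o, o + m(m+1) + m b] and its translate by n - m,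
   and the m b sums of an element of the sparse progression with one of the dense
   progression are pairwise distinct; only two triangular families of them fall into
   those intervals.  Divided by n, the resulting lower bound for |A + A| converges
   to [limit_bound c a w]; the two cases of the theorem take a = 3c/14,
   w = a(c - 3a), and a = alpha c, w = 1/2 - a^2. *)

From Stdlib Require Import Reals Lra ZArith.
From mathcomp Require Import all_boot zify.
(* Imported after mathcomp, so that [Finite] is the [Rbar] constructor. *)
From Coquelicot Require Import Coquelicot.

Set Implicit Arguments.
Unset Strict Implicit.
Unset Printing Implicit Defensive.

Local Open Scope nat_scope.

Lemma card_set_nat_cover N K (P : pred nat) (g : nat -> nat) :
  (forall x, x <= N -> P x -> exists2 i, i < K & x = g i) ->
  #|[set x : 'I_N.+1 | P x]| <= K.
Proof.
move=> cover; rewrite -[K]card_ord -cardsT.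
apply: leq_trans (leq_imset_card (fun i : 'I_K => inord (g i) : 'I_N.+1) _).
apply/subset_leq_card/subsetP => x; rewrite inE => Px.
have [i lt_iK x_eq] := cover x (ltn_ord x) Px.
apply/imsetP; exists (Ordinal lt_iK) => //; apply: val_inj.
by rewrite /= inordK -x_eq.
Qed.

Lemma card_interval N lo hi : hi <= N.+1 ->
  #|[set s : 'I_N.+1 | lo <= s < hi]| = hi - lo.
Proof.
move=> hiN; apply/eqP; rewrite eqn_leq; apply/andP; split.
  apply: (@card_set_nat_cover _ _ (fun x => lo <= x < hi) (fun i => lo + i)).
  by move=> x _ /andP [lo_x x_hi]; exists (x - lo); lia.
have lt_i (i : 'I_(hi - lo)) : lo + i < N.+1 by have := ltn_ord i; lia.
have inj : injective (fun i : 'I_(hi - lo) => inord (lo + i) : 'I_N.+1).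
  by move=> i j /(congr1 (@nat_of_ord _)); rewrite !inordK // => /addnI /val_inj.
rewrite -[X in X <= _]card_ord -cardsT -(card_imset _ inj).
apply/subset_leq_card/subsetP => _ /imsetP [i _ ->].
by rewrite inE inordK //; have := ltn_ord i; lia.
Qed.

Lemma card_triangle m b t :
  2 * #|[set p : 'I_m * 'I_b | p.1 + p.2 < t]| <= t * t.+1.
Proof.
elim: t => [|t IH].
  by rewrite (_ : [set p | _ < 0] = set0) ?cards0 //; apply/setP => p; rewrite !inE.
pose diag := [set p : 'I_m * 'I_b | p.1 + p.2 == t].
have diag_small : #|diag| <= t.+1.
  have inj : {in diag &, injective (fun p : 'I_m * 'I_b => inord p.1 : 'I_t.+1)}.
    move=> [i j] [i' j']; rewrite !inE /= => /eqP sum_t /eqP sum_t'.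
    move/(congr1 (@nat_of_ord _)); rewrite !inordK; try lia.
    by move=> eq_i; congr pair; apply: val_inj => /=; lia.
  by rewrite -(card_in_imset inj); apply: leq_trans (max_card _) _; rewrite card_ord.
have split_t : [set p : 'I_m * 'I_b | p.1 + p.2 < t.+1] =
               [set p : 'I_m * 'I_b | p.1 + p.2 < t] :|: diag.
  by apply/setP => p; rewrite !inE ltnS leq_eqVlt orbC.
rewrite split_t; have := (leq_card_setU [set p : 'I_m * 'I_b | p.1 + p.2 < t] diag).1.
lia.
Qed.

Lemma card_upper_triangle m b t :
  2 * #|[set p : 'I_m * 'I_b | m + b < p.1 + p.2 + t + 2]| <= t * t.+1.
Proof.
apply: leq_trans (card_triangle m b t); rewrite leq_mul2l /=.
pose flip (p : 'I_m * 'I_b) := (rev_ord p.1, rev_ord p.2).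
have inj : injective flip.
  move=> [i j] [i' j']; rewrite /flip /= => -[ri rj].
  have := ltn_ord i; have := ltn_ord i'; have := ltn_ord j; have := ltn_ord j'.
  by move=> *; congr pair; apply: val_inj => /=; lia.
rewrite -(card_imset _ inj); apply/subset_leq_card/subsetP => s /imsetP [[i j]].
by rewrite !inE /flip /= => ? -> /=; have := ltn_ord i; have := ltn_ord j; lia.
Qed.

Lemma card_extend (T : finType) (A D : {set T}) k :
  A \subset D -> #|A| <= k <= #|D| ->
  exists B : {set T}, [/\ A \subset B, B \subset D & #|B| = k].
Proof.
move=> AD /andP [Ak kD]; move: {2}(k - #|A|) (erefl (k - #|A|)) => d.
elim: d A AD Ak => [|d IH] A AD Ak kA.
  by exists A; split; rewrite ?subxx //; lia.
have [x /andP [xA xD]] : exists x, (x \notin A) && (x \in D).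
  apply/existsP; apply: contraTT kD; rewrite negb_exists => /forallP noD.
  have DA : D \subset A by apply/subsetP => x xD; have := noD x; rewrite xD andbT negbK.
  by have := subset_leq_card DA; lia.
have [|||B [xAB BD cardB]] := IH (x |: A); rewrite ?cardsU1 ?xA //; try lia.
  by rewrite subUset sub1set xD AD.
by exists B; split; rewrite ?(subset_trans (subsetUr _ _) xAB).
Qed.

Definition in_progressions m o b x :=
  [exists i : 'I_m, x == o + m.+1 * i] || [exists j : 'I_b, x == o + m * m.+1 + m * j].

Definition in_witness n m o b x :=
  [|| 0 < x <= m.+1, in_progressions m o b x | n - m <= x].

Definition witness n m o b : {set 'I_n.+1} := [set x : 'I_n.+1 | in_witness n m o b x].

Lemma card_witness n m o b : #|witness n m o b| <= 3 * m + 2 + b.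
Proof.
pose S (P : pred nat) := [set x : 'I_n.+1 | P x].
have -> : witness n m o b =
    S (fun x => 0 < x <= m.+1) :|: S (fun x => [exists i : 'I_m, x == o + m.+1 * i]) :|:
    S (fun x => [exists j : 'I_b, x == o + m * m.+1 + m * j]) :|: S (fun x => n - m <= x).
  by apply/setP => x; rewrite !inE /in_witness /in_progressions !orbA.
have cardU (X Y : {set 'I_n.+1}) : #|X :|: Y| <= #|X| + #|Y| := (leq_card_setU X Y).1.
have head : #|S (fun x => 0 < x <= m.+1)| <= m.+1.
  by apply: (@card_set_nat_cover _ _ _ succn) => x _ /andP [? ?]; exists x.-1; lia.
have sparse : #|S (fun x => [exists i : 'I_m, x == o + m.+1 * i])| <= m.
  apply: (@card_set_nat_cover _ _ _ (fun i => o + m.+1 * i)) => x _ /existsP [i /eqP ->].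
  by exists i.
have dense : #|S (fun x => [exists j : 'I_b, x == o + m * m.+1 + m * j])| <= b.
  apply: (@card_set_nat_cover _ _ _ (fun j => o + m * m.+1 + m * j)) => x _ /existsP [j /eqP ->].
  by exists j.
have tail : #|S (fun x => n - m <= x)| <= m.+1.
  by apply: (@card_set_nat_cover _ _ _ (addn (n - m))) => x xn ?; exists (x - (n - m)); lia.
apply: leq_trans (cardU _ _) _; apply: leq_trans (leq_add (cardU _ _) (leqnn _)) _.
apply: leq_trans (leq_add (leq_add (cardU _ _) (leqnn _)) (leqnn _)) _.
by apply: leq_trans (leq_add (leq_add (leq_add head sparse) dense) tail) _; lia.
Qed.

Lemma ord0_notin_witness n m o b : 0 < o -> m < n -> ord0 \notin witness n m o b.
Proof.
move=> o_gt0 m_lt_n; rewrite inE /in_witness /in_progressions /=.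
by apply/negP => /orP [/orP [] /existsP [? /eqP] | ]; lia.
Qed.

Lemma progressions_cover m o b r : 0 < m -> r < m * m.+1 + m * b ->
  exists x h, [/\ in_progressions m o b x, x + m <= o + m * m.+1 + m * b, h <= m
                & o + r = x + h].
Proof.
move=> m_gt0 r_lt; rewrite /in_progressions.
case: (ltnP r (m * m.+1)) => [r_sparse | r_dense].
- have i_lt : r %/ m.+1 < m by rewrite ltn_divLR // mulnC.
  have := ltn_pmod r (ltn0Sn m); have := divn_eq r m.+1.
  have : m.+1 * (r %/ m.+1).+1 <= m.+1 * m by rewrite leq_mul2l.
  exists (o + m.+1 * (r %/ m.+1)), (r %% m.+1); split; try lia.
  by apply/orP; left; apply/existsP; exists (Ordinal i_lt).
- set r' := r - m * m.+1.
  have j_lt : r' %/ m < b by rewrite ltn_divLR // mulnC; lia.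
  have := ltn_pmod r' m_gt0; have := divn_eq r' m.
  have : m * (r' %/ m).+1 <= m * b by rewrite leq_mul2l j_lt orbT.
  exists (o + m * m.+1 + m * (r' %/ m)), (r' %% m); split; try lia.
  by apply/orP; right; apply/existsP; exists (Ordinal j_lt).
Qed.

Definition sumset n (A : {set 'I_n.+1}) : {set 'I_(2 * n).+1} :=
  [set s : 'I_(2 * n).+1 | [exists a in A, exists b in A, nat_of_ord s == a + b]].

Lemma sumset_cardE n (A : {set 'I_n.+1}) : sumset_card A = #|sumset A|.
Proof. by []. Qed.

Lemma mem_sumset_witness n m o b (s : 'I_(2 * n).+1) x y :
  x <= n -> y <= n -> in_witness n m o b x -> in_witness n m o b y -> s = x + y :> nat ->
  s \in sumset (witness n m o b).
Proof.
move=> xn yn Ax Ay s_xy; rewrite inE; apply/existsP; exists (inord x).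
rewrite inE inordK ?ltnS // Ax; apply/existsP; exists (inord y).
by rewrite inE inordK ?ltnS // Ay; apply/eqP.
Qed.

Lemma card_sumset_mono n (A B : {set 'I_n.+1}) : A \subset B -> #|sumset A| <= #|sumset B|.
Proof.
move=> AB; apply/subset_leq_card/subsetP => s.
rewrite !inE => /existsP [x /andP [Ax /existsP [y /andP [Ay s_xy]]]].
apply/existsP; exists x; rewrite (subsetP AB _ Ax).
by apply/existsP; exists y; rewrite (subsetP AB _ Ay).
Qed.

Lemma sumset_card_le_s_kn n k (A : {set 'I_n.+1}) :
  ord0 \notin A -> #|A| <= k <= n -> sumset_card A <= s_kn k n.
Proof.
move=> A0 /andP [Ak kn].
have [||B [AB B0 cardB]] := @card_extend _ A [set~ ord0] k.
- by apply/subsetP => x Ax; rewrite !inE; apply: contraNneq A0 => <-.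
- by rewrite Ak cardsC1 card_ord kn.
apply: (@leq_trans (sumset_card B)); first by rewrite !sumset_cardE card_sumset_mono.
apply: leq_bigmax_cond.
by rewrite cardB eqxx andbT; apply/negP => /(subsetP B0); rewrite !inE eqxx.
Qed.

Section WitnessSumset.

Variables n m o b : nat.
Hypotheses (m_gt0 : 0 < m) (o_gt0 : 0 < o) (m_lt_n : m < n)
  (top_le_n : o + m * m.+1 + m * b <= n).

Local Notation top := (o + m * m.+1 + m * b).
Local Notation A := (witness n m o b).

Definition low_sums : {set 'I_(2 * n).+1} :=
  [set s : 'I_(2 * n).+1 | o.+1 <= s < top.+1].
Definition high_sums : {set 'I_(2 * n).+1} :=
  [set s : 'I_(2 * n).+1 | n - m + o <= s < n - m + top].

Lemma low_sums_sub : low_sums \subset sumset A.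
Proof.
apply/subsetP => s; rewrite inE => /andP [o_s s_top].
have [|x [h [Px x_top h_m s_eq]]] := @progressions_cover m o b (s - o.+1) m_gt0; first lia.
apply: (mem_sumset_witness (x := x) (y := h.+1)); try lia.
- by apply/orP; right; apply/orP; left.
- by rewrite /in_witness /= ltnS h_m.
Qed.

Lemma high_sums_sub : high_sums \subset sumset A.
Proof.
apply/subsetP => s; rewrite inE => /andP [lo_s s_hi].
have [|x [h [Px x_top h_m s_eq]]] :=
  @progressions_cover m o b (s - (n - m + o)) m_gt0; first lia.
apply: (mem_sumset_witness (x := x) (y := n - m + h)); try lia.
- by apply/orP; right; apply/orP; left.
- by rewrite /in_witness leq_addr !orbT.
Qed.

Definition pair_sum (p : 'I_m * 'I_b) : 'I_(2 * n).+1 :=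
  inord (o + m.+1 * p.1 + (o + m * m.+1 + m * p.2)).

Lemma pair_sumE p : pair_sum p = o + m.+1 * p.1 + (o + m * m.+1 + m * p.2) :> nat.
Proof.
case: p => i j; rewrite inordK //=.
have : m.+1 * i.+1 <= m.+1 * m by rewrite leq_mul2l ltn_ord orbT.
have : m * j.+1 <= m * b by rewrite leq_mul2l ltn_ord orbT.
lia.
Qed.

Lemma pair_sum_inj : injective pair_sum.
Proof.
(* The pair sum of (i, j) is 2o + m(m+1) + (i + j)m + i: its residue mod m is i. *)
move=> [i j] [i' j'] /(congr1 (@nat_of_ord _)); rewrite !pair_sumE /= => eq_sum.
have eq_i : i = i' :> nat.
  have : ((i + j) * m + i) %% m = ((i' + j') * m + i') %% m by congr (_ %% m); lia.
  by rewrite !modnMDl !modn_small.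
have eq_j : m * j = m * j' by lia.
by congr pair; apply: val_inj => //=; move/eqP: eq_j; rewrite eqn_mul2l gtn_eqF // => /eqP.
Qed.

Lemma pair_sums_sub : pair_sum @: setT \subset sumset A.
Proof.
apply/subsetP => _ /imsetP [[i j] _ ->].
have : m.+1 * i.+1 <= m.+1 * m by rewrite leq_mul2l ltn_ord orbT.
have : m * j.+1 <= m * b by rewrite leq_mul2l ltn_ord orbT.
move=> j_b i_m.
apply: (mem_sumset_witness (x := o + m.+1 * i) (y := o + m * m.+1 + m * j)); try lia.
- by apply/orP; right; apply/orP; left; apply/orP; left; apply/existsP; exists i.
- by apply/orP; right; apply/orP; left; apply/orP; right; apply/existsP; exists j.
- by rewrite pair_sumE.
Qed.

Local Notation t_low := ((m * b - o) %/ m + 1).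
Local Notation t_high := (m + b - (n - (o + m * m.+1)) %/ m).

Lemma pair_sums_overlap :
  (low_sums :|: high_sums) :&: pair_sum @: setT \subset
  pair_sum @: [set p : 'I_m * 'I_b | p.1 + p.2 < t_low] :|:
  pair_sum @: [set p : 'I_m * 'I_b | m + b < p.1 + p.2 + t_high + 2].
Proof.
apply/subsetP => s /setIP [s_in /imsetP [[i j] _ s_eq]]; rewrite s_eq in s_in *.
have := pair_sumE (i, j); move: s_in; rewrite !inE => /orP [] /andP [lo hi] /= sum_eq;
  rewrite sum_eq in lo hi.
- apply/orP; left; apply: imset_f; rewrite inE /=.
  have : (i + j) * m <= m * b - o by lia.
  by rewrite -leq_divRL //; lia.
- apply/orP; right; apply: imset_f; rewrite inE /=.
  set q := (n - (o + m * m.+1)) %/ m.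
  have q_le : q * m <= n - (o + m * m.+1) by apply: leq_divM.
  have : q * m < (i + j + 2) * m by have := ltn_ord i; lia.
  by rewrite ltn_pmul2r //; lia.
Qed.

Lemma card_sumset_witness :
  4 * (m * m.+1 + m * b) + 2 * (m * b) <=
  2 * #|sumset A| + t_low * t_low.+1 + t_high * t_high.+1
  + 2 * (top.+1 - (n - m + o)).
Proof.
pose pairs := pair_sum @: [set: 'I_m * 'I_b].
have card_low : #|low_sums| = m * m.+1 + m * b by rewrite card_interval; lia.
have card_high : #|high_sums| = m * m.+1 + m * b by rewrite card_interval; lia.
have card_low_high : #|low_sums :&: high_sums| <= top.+1 - (n - m + o).
  rewrite -(@card_interval (2 * n) (n - m + o) top.+1); last by lia.
  by apply/subset_leq_card/subsetP => s; rewrite !inE => /andP [/andP [_ ->] /andP [-> _]].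
have card_pairs : #|pairs| = m * b.
  by rewrite card_imset ?cardsT ?card_prod ?card_ord //; exact: pair_sum_inj.
have card_overlap : 2 * #|(low_sums :|: high_sums) :&: pairs| <=
                    t_low * t_low.+1 + t_high * t_high.+1.
  have := leq_add (card_triangle m b t_low) (card_upper_triangle m b t_high).
  rewrite -mulnDr; apply: leq_trans; rewrite leq_mul2l /=.
  apply: leq_trans (subset_leq_card pair_sums_overlap) _.
  apply: leq_trans (leq_card_setU _ _).1 _.
  exact: leq_add (leq_imset_card _ _) (leq_imset_card _ _).
have card_union : #|low_sums :|: high_sums :|: pairs| <= #|sumset A|.
  by apply: subset_leq_card; rewrite !subUset low_sums_sub high_sums_sub pair_sums_sub.
have := cardsUI low_sums high_sums; have := cardsUI (low_sums :|: high_sums) pairs.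
move: card_union card_overlap card_low card_high card_low_high card_pairs.
set LH := low_sums :|: high_sums.
set T_low := t_low * _; set T_high := t_high * _.
set U := #|LH :|: pairs|; set I := #|LH :&: pairs|; set L := #|LH|.
set J := #|low_sums :&: high_sums|; set X1 := #|low_sums|; set X2 := #|high_sums|.
set S := #|sumset A|; set P := #|pairs|.
lia.
Qed.

End WitnessSumset.

Local Open Scope R_scope.

Lemma INR_addn (x y : nat) : INR (x + y) = INR x + INR y.
Proof. exact: plus_INR. Qed.

Lemma INR_muln (x y : nat) : INR (x * y) = INR x * INR y.
Proof. exact: mult_INR. Qed.

Lemma INR_succn (x : nat) : INR x.+1 = INR x + 1.
Proof. exact: S_INR. Qed.

Lemma INR_leq (x y : nat) : (x <= y)%N -> INR x <= INR y.
Proof. by move/leP; apply: le_INR. Qed.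

Lemma INR_subn (x y : nat) : INR (x - y) = Rmax 0 (INR x - INR y).
Proof.
case: (leqP y x) => [yx | xy].
  rewrite Rmax_right; first exact: (minus_INR _ _ (leP yx)).
  by have := INR_leq yx; lra.
rewrite (_ : x - y = 0)%N; last by apply/eqP; rewrite subn_eq0 ltnW.
by rewrite Rmax_left //=; have := lt_INR _ _ (ltP xy); lra.
Qed.

Lemma INR_minn (x y : nat) : INR (minn x y) = Rmin (INR x) (INR y).
Proof.
rewrite /minn; case: ltnP => [xy | yx]; last by rewrite Rmin_right //; exact: INR_leq.
by rewrite Rmin_left //; have := lt_INR _ _ (ltP xy); lra.
Qed.

Lemma INR_divn_bounds (x m : nat) : (0 < m)%N ->
  INR x / INR m - 1 < INR (x %/ m) <= INR x / INR m.
Proof.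
move=> m_gt0; have m_pos : 0 < INR m by apply: lt_0_INR; apply/ltP.
have lo : INR x < (INR (x %/ m) + 1) * INR m.
  by rewrite -INR_succn -INR_muln; apply/lt_INR/ltP/ltn_ceil.
have hi : INR (x %/ m) * INR m <= INR x by rewrite -INR_muln; apply/INR_leq/leq_divM.
split; last exact/(Rle_div_r _ _ _ m_pos).
by have := proj2 (Rlt_div_l _ _ _ m_pos) lo; lra.
Qed.

Lemma is_lim_seq_Rmax0 (u : nat -> R) (l : R) :
  is_lim_seq u l -> is_lim_seq (fun n => Rmax 0 (u n)) (Rmax 0 l).
Proof.
have Rmax0E x : Rmax 0 x = (x + Rabs x) / 2.
  by rewrite /Rmax /Rabs; case: Rle_dec; case: Rcase_abs; lra.
move=> ul; rewrite Rmax0E; apply: (is_lim_seq_ext (fun n => (u n + Rabs (u n)) / 2)).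
  by move=> n; rewrite Rmax0E.
apply: is_lim_seq_div'; [|exact: is_lim_seq_const|lra].
by apply: is_lim_seq_plus' => //; exact: (is_lim_seq_abs u l ul).
Qed.

Lemma is_lim_seq_Rmin (u v : nat -> R) (lu lv : R) :
  is_lim_seq u lu -> is_lim_seq v lv -> is_lim_seq (fun n => Rmin (u n) (v n)) (Rmin lu lv).
Proof.
have RminE x y : Rmin x y = (x + y - Rabs (x - y)) / 2.
  by rewrite /Rmin /Rabs; case: Rle_dec; case: Rcase_abs; lra.
move=> ul vl; rewrite RminE.
apply: (is_lim_seq_ext (fun n => (u n + v n - Rabs (u n - v n)) / 2)).
  by move=> n; rewrite RminE.
apply: is_lim_seq_div'; [|exact: is_lim_seq_const|lra].
apply: is_lim_seq_minus'; first exact: is_lim_seq_plus'.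
by apply: (is_lim_seq_abs (fun n => u n - v n) (lu - lv)); exact: is_lim_seq_minus'.
Qed.

Lemma is_lim_seq_sqrt_INR : is_lim_seq (fun n => sqrt (INR n)) p_infty.
Proof.
apply: (is_lim_comp_seq (fun x => sqrt x) INR p_infty p_infty).
- exact: (is_lim_sqrt_p (fun x => x) p_infty (is_lim_id p_infty)).
- by exists 0%nat.
- exact: is_lim_seq_INR.
Qed.

Lemma is_lim_seq_inv_sqrt_INR : is_lim_seq (fun n => 1 / sqrt (INR n)) 0.
Proof.
apply: (is_lim_seq_ext (fun n => / sqrt (INR n))); first by move=> n; rewrite /Rdiv Rmult_1_l.
by apply: (is_lim_seq_inv _ p_infty is_lim_seq_sqrt_INR).
Qed.

Definition floor_nat (x : R) : nat := Z.to_nat (Int_part x).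

Lemma floor_natP x : 0 <= x -> x - 1 < INR (floor_nat x) <= x.
Proof.
move=> x_ge0; have [floor_le floor_gt] := base_Int_part x.
have : (-1 < Int_part x)%Z by apply: lt_IZR; lra.
by move=> ?; rewrite /floor_nat INR_IZR_INZ Z2Nat.id; [lra | lia].
Qed.

Lemma is_lim_seq_floor_sqrt x : 0 <= x ->
  is_lim_seq (fun n => INR (floor_nat (x * sqrt (INR n))) / sqrt (INR n)) x.
Proof.
move=> x_ge0.
apply: (is_lim_seq_le_le_loc (fun n => x - 1 / sqrt (INR n)) _ (fun _ => x)).
- exists 1%nat => n n_ge1.
  have s_pos : 0 < sqrt (INR n) by apply/sqrt_lt_R0/lt_0_INR; lia.
  have := floor_natP (Rmult_le_pos _ _ x_ge0 (Rlt_le _ _ s_pos)).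
  set f := INR (floor_nat _); move=> f_bounds; split.
  - apply/(Rle_div_r _ _ _ s_pos).
    have -> : (x - 1 / sqrt (INR n)) * sqrt (INR n) = x * sqrt (INR n) - 1 by field; lra.
    lra.
  - by apply/(Rle_div_l _ _ _ s_pos); lra.
- have := is_lim_seq_minus' _ _ _ _ (is_lim_seq_const x) is_lim_seq_inv_sqrt_INR.
  by rewrite Rminus_0_r.
- exact: is_lim_seq_const.
Qed.

Lemma is_lim_seq_floor_lin x : 0 <= x ->
  is_lim_seq (fun n => INR (floor_nat (x * INR n)).+1 / INR n) x.
Proof.
move=> x_ge0.
have inv_n : is_lim_seq (fun n => 1 / INR n) 0.
  apply: (is_lim_seq_ext (fun n => / INR n)); first by move=> n; rewrite /Rdiv Rmult_1_l.
  exact: (is_lim_seq_inv _ p_infty is_lim_seq_INR).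
apply: (is_lim_seq_le_le_loc (fun _ => x) _ (fun n => x + 1 / INR n)).
- exists 1%nat => n n_ge1.
  have n_pos : 0 < INR n by apply: lt_0_INR; lia.
  have := floor_natP (Rmult_le_pos _ _ x_ge0 (Rlt_le _ _ n_pos)).
  rewrite INR_succn; set f := INR (floor_nat _); move=> f_bounds; split.
  - by apply/(Rle_div_r _ _ _ n_pos); lra.
  - apply/(Rle_div_l _ _ _ n_pos).
    have -> : (x + 1 / INR n) * INR n = x * INR n + 1 by field; lra.
    lra.
- exact: is_lim_seq_const.
- have := is_lim_seq_plus' _ _ _ _ (is_lim_seq_const x) inv_n.
  by rewrite Rplus_0_r.
Qed.

Lemma eventually_scaled_sqrt_ge (x T : R) : 0 < x ->
  eventually (fun n => T <= x * sqrt (INR n)).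
Proof.
move=> x_pos; have [N large] := proj2 (is_lim_seq_spec _ _) is_lim_seq_sqrt_INR (T / x).
exists N => n /large T_lt; apply/Rlt_le.
by rewrite Rmult_comm -(Rlt_div_l _ _ _ x_pos).
Qed.

(* [card_sumset_witness] divided by n = s^2: [M], [B], [Q] and the unit [e] scale
   like s, [O] and [N] like n; the two [tri] terms bound the number of pair sums
   lying in the two intervals, and the last one the overlap of the intervals. *)
Definition tri (x e : R) : R := x * (x + e) / 2.

Definition sumset_bound (M B O Q e N : R) : R :=
  2 * (M * (M + e)) + 3 * (M * B)
  - tri (Rmax 0 (M * B - O) / M + e) e - tri (Rmax 0 (M + B - Q)) e
  - Rmax 0 (M * (M + e) + M * B + e * e - N + M * e).

Lemma sumset_bound_le_s_kn (n m o b k : nat) :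
  (0 < m)%N -> (0 < o)%N -> (m < n)%N -> (o + m * m.+1 + m * b <= n)%N ->
  (3 * m + 2 + b <= k <= n)%N ->
  sumset_bound (INR m) (INR b) (INR o) (INR ((n - (o + m * m.+1)) %/ m)) 1 (INR n)
  <= INR (s_kn k n).
Proof.
move=> m_gt0 o_gt0 m_lt_n top_le_n /andP [k_ge k_le].
set q := ((n - (o + m * m.+1)) %/ m)%N.
pose t_low := ((m * b - o) %/ m + 1)%N.
pose t_high := (m + b - q)%N.
pose ovl := ((o + m * m.+1 + m * b).+1 - (n - m + o))%N.
have card_le : (#|sumset (witness n m o b)| <= s_kn k n)%N.
  rewrite -sumset_cardE; apply: sumset_card_le_s_kn; first exact: ord0_notin_witness.
  by rewrite k_le andbT; apply: leq_trans (card_witness n m o b) k_ge.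
have cast : INR (4 * (m * m.+1 + m * b) + 2 * (m * b)) <=
            INR (2 * s_kn k n + t_low * t_low.+1 + t_high * t_high.+1 + 2 * ovl).
  apply/INR_leq/(leq_trans (card_sumset_witness m_gt0 o_gt0 m_lt_n top_le_n)).
  by rewrite !leq_add2r leq_mul2l card_le.
have t_low_le : INR t_low <= Rmax 0 (INR m * INR b - INR o) / INR m + 1.
  have [_] := INR_divn_bounds (m * b - o) m_gt0.
  by rewrite /t_low INR_addn INR_subn INR_muln /=; lra.
have t_high_eq : INR t_high = Rmax 0 (INR m + INR b - INR q).
  by rewrite /t_high INR_subn INR_addn.
have ovl_eq : INR ovl =
    Rmax 0 (INR m * (INR m + 1) + INR m * INR b + 1 * 1 - INR n + INR m * 1).
  rewrite /ovl INR_subn !(INR_addn, INR_succn, INR_muln) INR_subn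
    (Rmax_right 0 (INR n - INR m)).
    by f_equal; ring.
  by have := lt_INR _ _ (ltP m_lt_n); lra.
have t_low_ge := pos_INR t_low.
clearbody t_low t_high ovl.
rewrite !(INR_addn, INR_muln, INR_succn) /= in cast.
rewrite /sumset_bound /tri -t_high_eq -ovl_eq.
have : INR t_low * (INR t_low + 1) <=
       (Rmax 0 (INR m * INR b - INR o) / INR m + 1) *
       (Rmax 0 (INR m * INR b - INR o) / INR m + 1 + 1).
  by apply: Rmult_le_compat; lra.
lra.
Qed.

Lemma sumset_bound_scale M B O Q e N s : 0 < M -> 0 < s ->
  sumset_bound (M / s) (B / s) (O / (s * s)) (Q / s) (e / s) (N / (s * s)) =
  sumset_bound M B O Q e N / (s * s).
Proof.
move=> M_pos s_pos.
have Rmax0_scale x p : 0 < p -> Rmax 0 (x * p) = Rmax 0 x * p.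
  by move=> p_pos; rewrite Rmult_max_distr_r ?Rmult_0_l //; lra.
rewrite /sumset_bound /tri.
rewrite (_ : M / s * (B / s) - O / (s * s) = (M * B - O) * / (s * s)); last by field; lra.
rewrite (_ : M / s + B / s - Q / s = (M + B - Q) * / s); last by field; lra.
rewrite (_ : M / s * (M / s + e / s) + M / s * (B / s) + e / s * (e / s) - N / (s * s)
             + M / s * (e / s) =
             (M * (M + e) + M * B + e * e - N + M * e) * / (s * s)); last by field; lra.
rewrite !Rmax0_scale; try (apply: Rinv_0_lt_compat; nra).
by field; lra.
Qed.

Lemma is_lim_seq_sumset_bound (M B O Q e : nat -> R) (a b w q : R) :
  is_lim_seq M a -> is_lim_seq B b -> is_lim_seq O w -> is_lim_seq Q q ->
  is_lim_seq e 0 -> a <> 0 ->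
  is_lim_seq (fun n => sumset_bound (M n) (B n) (O n) (Q n) (e n) 1)
             (sumset_bound a b w q 0 1).
Proof.
move=> lim_M lim_B lim_O lim_Q lim_e a_neq0; rewrite /sumset_bound /tri.
have lim_invM : is_lim_seq (fun n => / M n) (/ a).
  by apply: (is_lim_seq_inv M a lim_M); case.
repeat first
  [ apply: is_lim_seq_minus' | apply: is_lim_seq_plus' | apply: is_lim_seq_mult'
  | apply: is_lim_seq_div'; last (try lra) | apply: is_lim_seq_Rmax0
  | apply: is_lim_seq_const | eassumption ].
Qed.

Lemma sumset_ratio_bound (n m o b k : nat) :
  (0 < m)%N -> (0 < o)%N -> (m < n)%N -> (o + m * m.+1 + m * b <= n)%N ->
  (3 * m + 2 + b <= k <= n)%N ->
  sumset_bound (INR m / sqrt (INR n)) (INR b / sqrt (INR n)) (INR o / INR n)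
    (INR ((n - (o + m * m.+1)) %/ m) / sqrt (INR n)) (1 / sqrt (INR n)) 1
  <= INR (s_kn k n) / INR n.
Proof.
move=> m_gt0 o_gt0 m_lt_n top_le_n k_bounds.
have n_pos : 0 < INR n by apply: lt_0_INR; apply/ltP; lia.
have m_pos : 0 < INR m by apply: lt_0_INR; apply/ltP.
set s := sqrt (INR n).
have s_pos : 0 < s by apply: sqrt_lt_R0.
have nE : INR n = s * s by rewrite sqrt_sqrt //; lra.
have := @sumset_bound_scale (INR m) (INR b) (INR o)
  (INR ((n - (o + m * m.+1)) %/ m)) 1 (INR n) s m_pos s_pos.
rewrite -nE Rdiv_diag; last lra.
move=> ->.
apply: Rmult_le_compat_r; first by apply/Rlt_le/Rinv_0_lt_compat.
exact: sumset_bound_le_s_kn.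
Qed.

Definition limit_bound (c a w : R) : R :=
  sumset_bound a (Rmin (c - 3 * a) ((1 - w - a * a) / a)) w ((1 - w - a * a) / a) 0 1.

Section Asymptotics.
Variables c a w : R.
Hypotheses (a_pos : 0 < a) (w_ge0 : 0 <= w) (three_a_lt_c : 3 * a < c)
  (w_a2_lt1 : w + a * a < 1).

Definition k_seq n := floor_nat (c * sqrt (INR n)).
Definition m_seq n := floor_nat (a * sqrt (INR n)).
Definition o_seq n := (floor_nat (w * INR n)).+1.
Definition q_seq n := ((n - (o_seq n + m_seq n * (m_seq n).+1)) %/ m_seq n)%N.
Definition b_seq n := minn (k_seq n - (3 * m_seq n + 2)) (q_seq n).

Lemma admissible_of_large n :
  Rmax a c + 1 <= sqrt (INR n) -> 1 <= a * sqrt (INR n) -> 3 <= (c - 3 * a) * sqrt (INR n) ->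
  a + 1 <= (1 - w - a * a) * sqrt (INR n) ->
  [/\ (0 < m_seq n)%N, (m_seq n < n)%N, (o_seq n + m_seq n * (m_seq n).+1 <= n)%N,
      (3 * m_seq n + 2 <= k_seq n)%N & (k_seq n <= n)%N].
Proof.
set s := sqrt (INR n) => s_large as_ge1 gap_k gap_o.
have a_le := Rmax_l a c; have c_le := Rmax_r a c.
have nE : INR n = s * s by rewrite sqrt_sqrt //; exact: pos_INR.
have s_ge0 : 0 <= s by exact: sqrt_pos.
have [m_lo m_hi] : a * s - 1 < INR (m_seq n) <= a * s by apply: floor_natP; nra.
have [k_lo k_hi] : c * s - 1 < INR (k_seq n) <= c * s by apply: floor_natP; nra.
have [o_lo o_hi] : w * INR n - 1 < INR (floor_nat (w * INR n)) <= w * INR n.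
  by apply: floor_natP; have := pos_INR n; nra.
have m_ge0 := pos_INR (m_seq n).
split; [apply/ltP/INR_lt | apply/ltP/INR_lt | apply/leP/INR_le | apply/leP/INR_le
       | apply/leP/INR_le]; rewrite ?INR_addn ?INR_muln ?INR_succn /=; nra.
Qed.

Lemma eventually_admissible : eventually (fun n =>
  [/\ (0 < m_seq n)%N, (m_seq n < n)%N, (o_seq n + m_seq n * (m_seq n).+1 <= n)%N,
      (3 * m_seq n + 2 <= k_seq n)%N & (k_seq n <= n)%N]).
Proof.
have gap_pos : 0 < c - 3 * a by lra.
have slack_pos : 0 < 1 - w - a * a by lra.
pose proof (filter_and _ _ (eventually_scaled_sqrt_ge (Rmax a c + 1) Rlt_0_1)
  (filter_and _ _ (eventually_scaled_sqrt_ge 1 a_pos)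
    (filter_and _ _ (eventually_scaled_sqrt_ge 3 gap_pos)
      (eventually_scaled_sqrt_ge (a + 1) slack_pos)))) as large.
refine (filter_imp _ _ _ large) => n [s_large [as_ge1 [gap_k gap_o]]].
by apply: admissible_of_large; rewrite // -[sqrt _]Rmult_1_l.
Qed.

Lemma is_lim_seq_m : is_lim_seq (fun n => INR (m_seq n) / sqrt (INR n)) a.
Proof. exact: is_lim_seq_floor_sqrt (Rlt_le _ _ a_pos). Qed.

Lemma is_lim_seq_k : is_lim_seq (fun n => INR (k_seq n) / sqrt (INR n)) c.
Proof. by apply: is_lim_seq_floor_sqrt; lra. Qed.

Lemma is_lim_seq_o : is_lim_seq (fun n => INR (o_seq n) / INR n) w.
Proof. exact: is_lim_seq_floor_lin. Qed.

Lemma is_lim_seq_q :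
  is_lim_seq (fun n => INR (q_seq n) / sqrt (INR n)) ((1 - w - a * a) / a).
Proof.
pose z n := (1 - (INR (o_seq n) / INR n + INR (m_seq n) / sqrt (INR n) *
              (INR (m_seq n) / sqrt (INR n) + 1 / sqrt (INR n)))) / (INR (m_seq n) / sqrt (INR n)).
have lim_z : is_lim_seq z ((1 - w - a * a) / a).
  rewrite (_ : 1 - w - a * a = 1 - (w + a * (a + 0))); last by ring.
  apply: is_lim_seq_div'; [| exact: is_lim_seq_m | lra].
  apply: is_lim_seq_minus'; first exact: is_lim_seq_const.
  apply: is_lim_seq_plus'; first exact: is_lim_seq_o.
  apply: is_lim_seq_mult'; first exact: is_lim_seq_m.
  by apply: is_lim_seq_plus'; [exact: is_lim_seq_m | exact: is_lim_seq_inv_sqrt_INR].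
apply: (is_lim_seq_le_le_loc (fun n => z n - 1 / sqrt (INR n)) _ z); last exact: lim_z.
- refine (filter_imp _ _ _ eventually_admissible) => n [m_gt0 m_lt_n v_le_n _ _].
  set s := sqrt (INR n); set m := m_seq n in m_gt0 v_le_n *.
  set v := (o_seq n + m * m.+1)%N in v_le_n *.
  have m_pos : 0 < INR m by apply: lt_0_INR; apply/ltP.
  have n_pos : 0 < INR n by apply: lt_0_INR; apply/ltP; lia.
  have s_pos : 0 < s by apply: sqrt_lt_R0.
  have nE : INR n = s * s by rewrite sqrt_sqrt //; lra.
  have zE : z n = (INR n - INR v) / INR m / s.
    by rewrite /z /v INR_addn INR_muln INR_succn -/s -/m nE; field; lra.
  have := INR_divn_bounds (n - v) m_gt0.
  rewrite -/(q_seq n) INR_subn Rmax_right; last by have := INR_leq v_le_n; lra.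
  rewrite zE (_ : (INR n - INR v) / INR m / s - 1 / s = ((INR n - INR v) / INR m - 1) / s);
    last by field; lra.
  have inv_s : 0 <= / s by apply/Rlt_le/Rinv_0_lt_compat.
  by move=> [q_lo q_hi]; split; apply: Rmult_le_compat_r; lra.
- have := is_lim_seq_minus' _ _ _ _ lim_z is_lim_seq_inv_sqrt_INR.
  by rewrite Rminus_0_r.
Qed.

Lemma is_lim_seq_b : is_lim_seq (fun n => INR (b_seq n) / sqrt (INR n))
                                (Rmin (c - 3 * a) ((1 - w - a * a) / a)).
Proof.
pose K n := INR (k_seq n) / sqrt (INR n) - 3 * (INR (m_seq n) / sqrt (INR n))
            - 2 * (1 / sqrt (INR n)).
apply: (is_lim_seq_ext_loc (fun n => Rmin (K n) (INR (q_seq n) / sqrt (INR n)))).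
  refine (filter_imp _ _ _ eventually_admissible) => n [m_gt0 m_lt_n _ mk_le _].
  have s_pos : 0 < sqrt (INR n) by apply/sqrt_lt_R0/lt_0_INR/ltP; lia.
  rewrite /b_seq INR_minn /Rdiv Rmult_min_distr_r; last exact/Rlt_le/Rinv_0_lt_compat.
  rewrite INR_subn Rmax_right; last by have := INR_leq mk_le; lra.
  by congr Rmin; rewrite /K INR_addn INR_muln /=; field; lra.
apply: is_lim_seq_Rmin; last exact: is_lim_seq_q.
rewrite -[c - 3 * a]Rminus_0_r -[X in _ - X](Rmult_0_r 2).
apply: is_lim_seq_minus'; first apply: is_lim_seq_minus'.
- exact: is_lim_seq_k.
- exact: is_lim_seq_scal_l _ 3 _ is_lim_seq_m.
- exact: is_lim_seq_scal_l _ 2 _ is_lim_seq_inv_sqrt_INR.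
Qed.

Lemma eventually_sumset_bound_le : eventually (fun n =>
  sumset_bound (INR (m_seq n) / sqrt (INR n)) (INR (b_seq n) / sqrt (INR n))
    (INR (o_seq n) / INR n) (INR (q_seq n) / sqrt (INR n)) (1 / sqrt (INR n)) 1
  <= INR (s_kn (k_seq n) n) / INR n).
Proof.
refine (filter_imp _ _ _ eventually_admissible) => n [m_gt0 m_lt_n v_le_n mk_le k_le_n].
apply: sumset_ratio_bound => //.
- have b_le_q : (b_seq n <= q_seq n)%N by apply: geq_minr.
  have : (q_seq n * m_seq n <= n - (o_seq n + m_seq n * (m_seq n).+1))%N by apply: leq_divM.
  have : (m_seq n * b_seq n <= m_seq n * q_seq n)%N by rewrite leq_mul2l b_le_q orbT.
  lia.
- have : (b_seq n <= k_seq n - (3 * m_seq n + 2))%N by apply: geq_minl.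
  lia.
Qed.

Lemma limit_bound_le_s_c : Rbar_le (limit_bound c a w) (s_c c).
Proof.
have lim := is_lim_seq_sumset_bound is_lim_seq_m is_lim_seq_b is_lim_seq_o is_lim_seq_q
  is_lim_seq_inv_sqrt_INR (Rgt_not_eq _ _ a_pos).
have := LimInf_le _ _ eventually_sumset_bound_le.
by rewrite (is_LimInf_seq_unique _ _ (is_lim_LimInf_seq _ _ lim)).
Qed.

End Asymptotics.

Lemma limit_boundE c a w : 0 < a -> 0 <= w -> w + a * (a + (c - 3 * a)) <= 1 ->
  limit_bound c a w =
  2 * a ^ 2 + 3 * a * (c - 3 * a) - (Rmax 0 (a * (c - 3 * a) - w) / a) ^ 2 / 2
  - (Rmax 0 (2 * a ^ 2 + a * (c - 3 * a) + w - 1) / a) ^ 2 / 2.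
Proof.
move=> a_pos w_ge0 fits.
have Rmax0_div x : Rmax 0 x / a = Rmax 0 (x / a).
  by rewrite /Rdiv Rmult_max_distr_r ?Rmult_0_l //; apply/Rlt_le/Rinv_0_lt_compat.
rewrite /limit_bound /sumset_bound /tri Rmin_left; last first.
  by apply/(Rle_div_r _ _ _ a_pos); nra.
rewrite (Rmax_left 0 (_ - 1 + _)); last by nra.
rewrite (_ : a + (c - 3 * a) - (1 - w - a * a) / a =
             (2 * a ^ 2 + a * (c - 3 * a) + w - 1) / a); last by field; lra.
by rewrite -Rmax0_div; field; lra.
Qed.

Lemma sqrt2_sqrt3_facts :
  [/\ sqrt 2 * sqrt 2 = 2, sqrt 3 * sqrt 3 = 3, 0 < sqrt 2, 0 < sqrt 3
    & sqrt 2 * sqrt 3 < 3].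
Proof.
have s2 : sqrt 2 * sqrt 2 = 2 by apply: sqrt_sqrt; lra.
have s3 : sqrt 3 * sqrt 3 = 3 by apply: sqrt_sqrt; lra.
have s2_pos : 0 < sqrt 2 by apply: sqrt_lt_R0; lra.
have s3_pos : 0 < sqrt 3 by apply: sqrt_lt_R0; lra.
split => //; nra.
Qed.

Lemma lower_bound_small c : 0 < c -> c <= c_0 -> Rbar_le (9 * c ^ 2 / 28) (s_c c).
Proof.
move=> c_pos c_le.
have [_ s3 _ s3_pos _] := sqrt2_sqrt3_facts.
have c2_le : c * c <= 49 / 12.
  have two_s3_pos : 0 < 2 * sqrt 3 by lra.
  have : c * (2 * sqrt 3) <= 7 by apply/(Rle_div_r _ _ _ two_s3_pos).
  nra.
pose a := 3 * c / 14.
have a_pos : 0 < a by rewrite /a; lra.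
have w_ge0 : 0 <= a * (c - 3 * a) by rewrite /a; nra.
apply: Rbar_le_trans (limit_bound_le_s_c a_pos w_ge0 _ _) => /=; last 2 first.
- by rewrite /a; lra.
- by rewrite /a; nra.
rewrite limit_boundE //; last by rewrite /a; nra.
by rewrite Rminus_diag !Rmax_left /a; nra.
Qed.

Lemma alpha_on_segment c : c_0 <= c <= c_1 ->
  exists2 t, 0 <= t <= 1 &
    c = (1 - t) * (7 * sqrt 3 / 6) + t * (2 * sqrt 2) /\
    alpha c = (1 - t) * (sqrt 3 / 4) + t * (sqrt 2 / 2).
Proof.
have [s2 s3 s2_pos s3_pos _] := sqrt2_sqrt3_facts.
have c0E : c_0 = 7 * sqrt 3 / 6 by rewrite /c_0; field_simplify_eq; lra.
have inv_s2 : 1 / sqrt 2 = sqrt 2 / 2 by field_simplify_eq; lra.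
have gap_pos : 0 < c_1 - c_0 by rewrite c0E /c_1; nra.
move=> c_range; exists ((c - c_0) / (c_1 - c_0)).
  by split; [apply: Rdiv_le_0_compat | apply/(Rle_div_l _ _ _ gap_pos)]; lra.
by rewrite /alpha inv_s2 c0E /c_1 in gap_pos *; split; field; lra.
Qed.

Lemma alpha_bounds c : c_0 <= c <= c_1 ->
  [/\ 0 < alpha c, alpha c ^ 2 <= 1 / 2, 3 * alpha c < c
    & alpha c * (c - 3 * alpha c) <= 1 / 2].
Proof.
move=> /alpha_on_segment [t t_range [-> ->]].
have [s2 s3 s2_pos s3_pos s6_lt3] := sqrt2_sqrt3_facts.
set a := _ + _; set B := _ - 3 * a.
have a_pos : 0 < a by rewrite /a; nra.
have a_le : a <= sqrt 2 / 2 by rewrite /a; nra.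
have BE : B = (1 - t) * (5 * sqrt 3 / 12) + t * (sqrt 2 / 2).
  by rewrite /B /a; field.
have aBE : a * B = (1 - t) ^ 2 * (sqrt 3 * sqrt 3) * 5 / 48
                   + t * (1 - t) * (sqrt 2 * sqrt 3) / 3 + t ^ 2 * (sqrt 2 * sqrt 2) / 4.
  by rewrite BE /a; field.
split.
- exact: a_pos.
- by nra.
- suff : 0 < B by rewrite /B; lra.
  by rewrite BE; nra.
- (* 1/2 - a (c - 3a) = 3/16 (1 - t)^2 + (1 - sqrt 6 / 3) t (1 - t) *)
  rewrite aBE s2 s3.
  have : 0 <= t * (1 - t) * (3 - sqrt 2 * sqrt 3) by apply: Rmult_le_pos; nra.
  nra.
Qed.

Lemma lower_bound_mid c : c_0 <= c <= c_1 -> Rbar_le (bound_mid c) (s_c c).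
Proof.
move=> /alpha_bounds.
have -> : bound_mid c = - c ^ 2 + 7 * alpha c * c + c / alpha c - 11 * alpha c ^ 2 - 2
                        - 1 / (4 * alpha c ^ 2) by [].
move: (alpha c) => a [a_pos a2_le three_a_lt aB_le].
have w_ge0 : 0 <= 1 / 2 - a * a by nra.
apply: Rbar_le_trans (limit_bound_le_s_c a_pos w_ge0 three_a_lt _); last by lra.
rewrite /= limit_boundE //; last by nra.
rewrite (_ : a * (c - 3 * a) - (1 / 2 - a * a) = a * (c - 3 * a) + a ^ 2 - 1 / 2); last by field.
rewrite (_ : 2 * a ^ 2 + a * (c - 3 * a) + (1 / 2 - a * a) - 1 =
             a * (c - 3 * a) + a ^ 2 - 1 / 2); last by field.
set d := a * (c - 3 * a) + a ^ 2 - 1 / 2.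
have : (Rmax 0 d / a) ^ 2 <= (d / a) ^ 2.
  rewrite /Rdiv !Rpow_mult_distr; apply: Rmult_le_compat_r; first exact: pow2_ge_0.
  by rewrite /Rmax; case: Rle_dec; nra.
have -> : - c ^ 2 + 7 * a * c + c / a - 11 * a ^ 2 - 2 - 1 / (4 * a ^ 2) =
          2 * a ^ 2 + 3 * a * (c - 3 * a) - (d / a) ^ 2 by rewrite /d; field; lra.
lra.
Qed.

Theorem lemma5 (c : R) (hc : 0 < c) :
  (c <= c_0 -> Rbar_le (Finite (9 * c ^ 2 / 28)) (s_c c)) /\
  (c_0 <= c <= c_1 -> Rbar_le (Finite (bound_mid c)) (s_c c)).
Proof.
split; [exact: lower_bound_small hc | exact: lower_bound_mid].
Qed.
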